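(* Consider a VCG combinatorial auction with a set $G$ of items, $|G|\ge3$, and a set $N$ of agents, $|N|\ge2$, and let $s=(s_1,\dots,s_n)$ be an efficient ex-post equilibrium. Then there exists a type profile $\theta=(\theta_1,\dots,\theta_n)$ and an agent $i\in N$ such that for every pair of bundles $X,Y\in2^G$ with $X\subset Y$ (proper inclusion), $s_i(X,\theta_i)\ne s_i(Y,\theta_i)$.
   Context: Combinatorial auction: items $G$, agents $N$; an outcome assigns pairwise disjoint bundles $o_i\subseteq G$. Types: valuations $v_i(\cdot,\theta_i):2^G\to\mathbb{R}_{\ge0}$ with $v_i(\emptyset,\theta_i)=0$ and monotone under inclusion; utilities quasilinear. VCG mechanism (direct): each agent reports a valuation (a bid $x_i(B)$ for each bundle $B$); an outcome maximizing $\sum_i x_i(o_i)$ is chosen; agent $i$ pays $\max_{o'}\sum_{j\ne i}x_j(o'_j)-\sum_{j\ne i}x_j(o_j)$. A strategy $s_i$ maps agent $i$'s type to a report; $s_i(X,\theta_i)$ denotes the bid of agent $i$ with type $\theta_i$ on bundle $X$. $s$ is an ex-post equilibrium if for every type profile $\theta$ and agent $i$, $s_i(\theta_i)$ is a best response to $s_{-i}(\theta_{-i})$; it is efficient if for every type profile the chosen outcome maximizes total true value. *)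

From HB Require Import structures.
From mathcomp Require Import all_boot all_order all_algebra.
From mathcomp Require Import reals.
Set Implicit Arguments. Unset Strict Implicit. Unset Printing Implicit Defensive.
Import Order.TTheory GRing.Theory Num.Theory.
Local Open Scope ring_scope.

Section Auction.
Variables (R : realType) (N G : finType).

Definition valuation := {ffun {set G} -> R}.

Definition is_valuation (v : valuation) : Prop :=
  [/\ v set0 = 0, (forall B : {set G}, 0 <= v B) & (forall A B : {set G}, A \subset B -> v A <= v B)].

Definition profile := {ffun N -> valuation}.

Definition valid_profile (x : profile) : Prop := forall i, is_valuation (x i).

Definition outcome := {ffun N -> {set G}}.

Definition feasible (o : outcome) : bool :=
  [forall i, forall j, (i != j) ==> [disjoint o i & o j]].

Definition welfare (x : profile) (o : outcome) : R := \sum_i x i (o i).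

Definition welfare_others (x : profile) (i : N) (o : outcome) : R :=
  \sum_(j | j != i) x j (o j).

(* max over feasible outcomes; 0 is a correct neutral element since bids are
   nonnegative and the empty allocation is feasible with welfare 0. *)
Definition max_welfare_others (x : profile) (i : N) : R :=
  \big[Num.max/0]_(o : outcome | feasible o) welfare_others x i o.

Definition welfare_maximizing (x : profile) (o : outcome) : Prop :=
  feasible o /\ forall o', feasible o' -> welfare x o' <= welfare x o.

(* A VCG allocation rule: on every (admissible) bid profile it selects a
   feasible outcome maximizing reported welfare (arbitrary tie-breaking). *)
Definition vcg_rule (f : profile -> outcome) : Prop :=
  forall x, valid_profile x -> welfare_maximizing x (f x).

Definition vcg_payment (f : profile -> outcome) (x : profile) (i : N) : R :=
  max_welfare_others x i - welfare_others x i (f x).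

Definition vcg_utility (f : profile -> outcome) (v : valuation) (x : profile)
  (i : N) : R := v (f x i) - vcg_payment f x i.

Definition strategy := N -> valuation -> valuation.

Definition valid_strategy (s : strategy) : Prop :=
  forall i v, is_valuation v -> is_valuation (s i v).

Definition play (s : strategy) (th : profile) : profile :=
  [ffun j => s j (th j)].

Definition deviate (x : profile) (i : N) (b : valuation) : profile :=
  [ffun j => if j == i then b else x j].

Definition ex_post_equilibrium (f : profile -> outcome) (s : strategy) : Prop :=
  forall th : profile, valid_profile th -> forall (i : N) (b : valuation),
    is_valuation b ->
    vcg_utility f (th i) (deviate (play s th) i b) i
      <= vcg_utility f (th i) (play s th) i.

Definition efficient_strategy (f : profile -> outcome) (s : strategy) : Prop :=
  forall th : profile, valid_profile th -> welfare_maximizing th (f (play s th)).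

End Auction.

From HB Require Import structures.
From mathcomp Require Import all_boot all_order all_algebra.
From mathcomp Require Import reals.
From mathcomp Require Import zify lra.
Import Order.TTheory GRing.Theory Num.Theory.
Local Open Scope ring_scope.

(* Give agent i the type B |-> 2|B| and every other agent the zero type.  If
   s_i maps this type to a bid with s_i(X) = s_i(Y) for some X ⊊ Y, let a
   second agent j have the type w(B) = |B| + 2|B \ Y|.  Efficiency forces the
   allocation (Y, ~Y) to i and j.  Reporting w truthfully is, as always in VCG,
   at least as good for j as any outcome under the others' reports, in
   particular (X, ~X); so by the equilibrium condition
   w(~X) + s_i(X) <= w(~Y) + s_i(Y), i.e. w(~X) <= w(~Y), although
   w(~X) = |~X| + 2|~Y| > 3|~Y| = w(~Y).  Only two agents and no lower bound
   on the number of items are needed. *)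

Section VCG.
Set Implicit Arguments. Unset Strict Implicit.
Variables (R : realType) (N G : finType).
Implicit Types (x : profile R N G) (o : outcome N G) (v : valuation R G).

Lemma welfare_split x o j : welfare x o = x j (o j) + welfare_others x j o.
Proof. by rewrite /welfare (bigD1 j). Qed.

Lemma welfare_others_supported x o i j : i != j ->
  (forall k, k != i -> k != j -> x k (o k) = 0) ->
  welfare_others x j o = x i (o i).
Proof.
move=> ij x0; rewrite /welfare_others (bigD1 i) //= big1 ?addr0 //.
by move=> k /andP[kj ki]; apply: x0.
Qed.

Lemma welfare_others_deviate x j b o :
  welfare_others (deviate x j b) j o = welfare_others x j o.
Proof. by apply: eq_bigr => k kj; rewrite ffunE (negbTE kj). Qed.

Lemma max_welfare_others_deviate x j b :
  max_welfare_others (deviate x j b) j = max_welfare_others x j.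
Proof. by apply: eq_bigr => o _; rewrite welfare_others_deviate. Qed.

Lemma deviate_valid x j b :
  valid_profile x -> is_valuation b -> valid_profile (deviate x j b).
Proof. by move=> xv bv k; rewrite ffunE; case: ifP. Qed.

Lemma feasible_disjoint o i j : feasible o -> i != j -> [disjoint o i & o j].
Proof. by move=> /forallP /(_ i) /forallP /(_ j) /implyP. Qed.

Lemma playE (s : strategy R N G) th k : play s th k = s k (th k).
Proof. by rewrite ffunE. Qed.

Lemma play_valid (s : strategy R N G) th :
  valid_strategy s -> valid_profile th -> valid_profile (play s th).
Proof. by move=> vs thv k; rewrite playE; apply/vs/thv. Qed.

Lemma vcg_utility_truthful_ge (f : profile R N G -> outcome N G) x j v o :
  vcg_rule f -> valid_profile x -> is_valuation v -> feasible o ->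
  v (o j) + welfare_others x j o - max_welfare_others x j
    <= vcg_utility f v (deviate x j v) j.
Proof.
move=> vcg xv vv fo; set x' := deviate x j v.
have x'j : x' j = v by rewrite ffunE eqxx.
have := (vcg x' (deviate_valid j xv vv)).2 o fo.
rewrite /vcg_utility /vcg_payment max_welfare_others_deviate.
rewrite !(welfare_split _ _ j) x'j !welfare_others_deviate.
lra.
Qed.

Lemma ex_post_equilibrium_welfare_ge (f : profile R N G -> outcome N G)
    (s : strategy R N G) (th : profile R N G) j o :
  vcg_rule f -> valid_strategy s -> ex_post_equilibrium f s ->
  valid_profile th -> feasible o ->
  th j (o j) + welfare_others (play s th) j o
    <= th j (f (play s th) j) + welfare_others (play s th) j (f (play s th)).
Proof.
move=> vcg vs heq thv fo.
have := heq th thv j (th j) (thv j).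
have := vcg_utility_truthful_ge j vcg (play_valid vs thv) (thv j) fo.
rewrite /vcg_utility /vcg_payment; lra.
Qed.

End VCG.

Section TwoAgents.
Set Implicit Arguments. Unset Strict Implicit.
Variables (R : realType) (N G : finType).
Implicit Types (x : profile R N G) (o : outcome N G) (u w : valuation R G).
Implicit Types (A X Y : {set G}).

Definition zero_valuation : valuation R G := [ffun _ => 0].

Definition twice_card_valuation : valuation R G :=
  [ffun B : {set G} => (#|B|.*2)%:R].

Definition outside_bonus_valuation (Y : {set G}) : valuation R G :=
  [ffun B : {set G} => (#|B| + (#|B :\: Y|).*2)%:R].

Lemma zero_valuation_valid : is_valuation zero_valuation.
Proof. by split=> [|B|A B _]; rewrite !ffunE. Qed.

Lemma twice_card_valuation_valid : is_valuation twice_card_valuation.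
Proof.
split=> [|B|A B AB]; rewrite !ffunE ?cards0 ?ler0n //.
by rewrite ler_nat leq_double subset_leq_card.
Qed.

Lemma outside_bonus_valuation_valid Y : is_valuation (outside_bonus_valuation Y).
Proof.
split=> [|B|A B AB]; rewrite !ffunE ?set0D ?cards0 ?ler0n //.
rewrite ler_nat leq_add ?subset_leq_card // leq_double subset_leq_card //.
exact: setSD.
Qed.

Lemma outside_bonus_valuation_proper X Y : X \proper Y ->
  outside_bonus_valuation Y (~: Y) < outside_bonus_valuation Y (~: X).
Proof.
move=> XY; rewrite !ffunE ltr_nat.
have -> : ~: X :\: Y = ~: Y.
  by rewrite setDE setIC -setCU (setUidPl (proper_sub XY)).
rewrite setDE setIid ltn_add2r; apply: proper_card; by rewrite properC.
Qed.

(* With i bidding 2|A| and j bidding |B| + 2|B \ Y|, each item of Y is worth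
   2 to i against 1 to j, and each other item 3 to j against 2 to i. *)
Lemma outside_bonus_allocation_unique (Y A B : {set G}) : [disjoint A & B] ->
  twice_card_valuation Y + outside_bonus_valuation Y (~: Y)
    <= twice_card_valuation A + outside_bonus_valuation Y B ->
  A = Y /\ B = ~: Y.
Proof.
move=> /disjoint_setI0 AB; rewrite !ffunE -!natrD ler_nat setDE setIid.
have disjoint_card (C D P : {set G}) : C :&: D = set0 ->
    (#|C :&: P| + #|D :&: P| <= #|P|)%N.
  move=> CD; have := cardsU (C :&: P) (D :&: P).
  rewrite setIACA CD set0I cards0 subn0 => <-.
  by rewrite subset_leq_card // subUset !subsetIr.
have hY := disjoint_card A B Y AB; have hC := disjoint_card A B (~: Y) AB.
have := cardsID Y A; have := cardsID Y B; have := cardsC Y.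
rewrite !setDE => eB eA eY h.
have a2 : A :&: ~: Y = set0 by apply/eqP; rewrite -cards_eq0; lia.
have b1 : B :&: Y = set0 by apply/eqP; rewrite -cards_eq0; lia.
split; apply/eqP; rewrite eqEcard.
- by rewrite -setD_eq0 setDE a2 eqxx /=; lia.
- by rewrite -disjoints_subset -setI_eq0 b1 eqxx /=; lia.
Qed.

Variables (i j : N).
Hypothesis ij : i != j.
Let ji : j != i. Proof. by rewrite eq_sym. Qed.

Definition pair_profile (u w : valuation R G) : profile R N G :=
  [ffun k => if k == i then u else if k == j then w else zero_valuation].

Definition pair_outcome (A : {set G}) : outcome N G :=
  [ffun k => if k == i then A else if k == j then ~: A else set0].

Lemma pair_profile_valid u w :
  is_valuation u -> is_valuation w -> valid_profile (pair_profile u w).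
Proof.
move=> uv wv k; rewrite ffunE.
by case: ifP => _ //; case: ifP => _ //; apply: zero_valuation_valid.
Qed.

Lemma pair_profileE u w :
  [/\ pair_profile u w i = u, pair_profile u w j = w
    & forall k, k != i -> k != j -> pair_profile u w k = zero_valuation].
Proof.
split; rewrite ?ffunE ?eqxx ?(negbTE ji) //.
by move=> k ki kj; rewrite ffunE (negbTE ki) (negbTE kj).
Qed.

Lemma pair_outcomeE A :
  [/\ pair_outcome A i = A, pair_outcome A j = ~: A
    & forall k, k != i -> k != j -> pair_outcome A k = set0].
Proof.
split; rewrite ?ffunE ?eqxx ?(negbTE ji) //.
by move=> k ki kj; rewrite ffunE (negbTE ki) (negbTE kj).
Qed.

Lemma pair_outcome_feasible A : feasible (pair_outcome A).
Proof.
apply/forallP=> k; apply/forallP=> l; apply/implyP; rewrite -setI_eq0.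
have [oi oj ok] := pair_outcomeE A.
case: (eqVneq k i) => [->|ki]; case: (eqVneq l i) => [->|li]; rewrite ?eqxx // => kl.
- by case: (eqVneq l j) => [->|lj]; rewrite oi ?oj ?setICr ?ok ?setI0.
- case: (eqVneq k j) => [->|kj]; first by rewrite oi oj setIC setICr.
  by rewrite oi ok ?set0I.
case: (eqVneq k j) => [kj|kj]; last by rewrite ok ?set0I.
case: (eqVneq l j) => [lj|lj]; last by rewrite (ok l) ?setI0.
by rewrite kj lj eqxx in kl.
Qed.

Lemma pair_profile_welfare u w o :
  welfare (pair_profile u w) o = u (o i) + w (o j).
Proof.
have [pi pj pk] := pair_profileE u w.
rewrite (welfare_split _ _ i) (welfare_others_supported ji) ?pi ?pj //.
by move=> k kj ki; rewrite pk // ffunE.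
Qed.

Lemma welfare_others_pair_outcome x A :
  valid_profile x -> welfare_others x j (pair_outcome A) = x i A.
Proof.
have [oi _ ok] := pair_outcomeE A.
move=> xv; rewrite (welfare_others_supported ij) ?oi //.
by move=> k ki kj; rewrite ok //; case: (xv k).
Qed.

Lemma set0_disjoint_setC (C Y : {set G}) :
  C :&: Y = set0 -> C :&: ~: Y = set0 -> C = set0.
Proof. by move=> CY CY'; rewrite -(setIT C) -(setUCr Y) setIUr CY CY' setU0. Qed.

Variables (f : profile R N G -> outcome N G) (s : strategy R N G).
Hypotheses (vcg : vcg_rule f) (vs : valid_strategy s).
Hypotheses (heq : ex_post_equilibrium f s) (eff : efficient_strategy f s).

Lemma efficient_pair_outcome Y :
  f (play s (pair_profile twice_card_valuation (outside_bonus_valuation Y)))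
    = pair_outcome Y.
Proof.
have [fo omax] := eff (pair_profile_valid twice_card_valuation_valid
                                          (outside_bonus_valuation_valid Y)).
have [oi oj ok] := pair_outcomeE Y.
have := omax _ (pair_outcome_feasible Y).
rewrite !pair_profile_welfare oi oj.
move=> /(outside_bonus_allocation_unique (feasible_disjoint fo ij)) [oiY ojY].
apply/ffunP=> k; case: (eqVneq k i) => [->|ki]; first by rewrite oi.
case: (eqVneq k j) => [->|kj]; first by rewrite oj.
rewrite ok //; apply: set0_disjoint_setC (Y) _ _; apply/disjoint_setI0.
- by have := feasible_disjoint fo ki; rewrite oiY.
- by have := feasible_disjoint fo kj; rewrite ojY.
Qed.

Lemma equilibrium_bid_proper_neq X Y : X \proper Y ->
  s i twice_card_valuation X != s i twice_card_valuation Y.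
Proof.
move=> XY.
have thv := pair_profile_valid twice_card_valuation_valid
                               (outside_bonus_valuation_valid Y).
have [pi pj _] := pair_profileE twice_card_valuation (outside_bonus_valuation Y).
have [_ oXj _] := pair_outcomeE X; have [_ oYj _] := pair_outcomeE Y.
have xv := play_valid vs thv.
have := ex_post_equilibrium_welfare_ge j vcg vs heq thv (pair_outcome_feasible X).
rewrite efficient_pair_outcome !welfare_others_pair_outcome //.
rewrite pj oXj oYj playE pi; apply: contraTneq => ->.
by have := outside_bonus_valuation_proper XY; lra.
Qed.

End TwoAgents.

Theorem proposition6 (R : realType) (N G : finType)
  (f : profile R N G -> outcome N G) (s : strategy R N G) :
  (3 <= #|G|)%N -> (2 <= #|N|)%N ->
  vcg_rule f -> valid_strategy s ->
  ex_post_equilibrium f s -> efficient_strategy f s ->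
  exists th : profile R N G, valid_profile th /\
    exists i : N, forall X Y : {set G}, X \proper Y -> s i (th i) X != s i (th i) Y.
Proof.
move=> _ /card_gt1P [i [j [_ _ ij]]] vcg vs heq eff.
set u := twice_card_valuation R G; set z := zero_valuation R G.
exists (pair_profile i j u z); split.
  exact: pair_profile_valid (twice_card_valuation_valid R G) (zero_valuation_valid R G).
exists i => X Y XY; have [-> _ _] := pair_profileE ij u z.
exact (equilibrium_bid_proper_neq ij vcg vs heq eff XY).
Qed.
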